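(* Let $(a_n)_{n\ge0}$ be the sequence defined by \[ \sum_{n=0}^{\infty}a_nz^n=\frac{1+36z+\sqrt{(1-12z)^3}}{2(1+4z)^2} \] (the sequence $1,1,3,14,83,570,\dots$, OEIS A220910). Then for all $n\ge2$, \[ n a_n=(8n-34)a_{n-1}+24(2n-3)a_{n-2}. \]
   Context: The square root is the branch analytic near $z=0$ with value $1$ at $z=0$. *)

From Stdlib Require Import Reals.
From Coquelicot Require Import Coquelicot.
Open Scope R_scope.

(* For real z near 0, (1-12z)^3 > 0 and Stdlib's sqrt is the nonnegative
   root, i.e. the branch analytic near 0 with value 1 at 0. *)
Definition gf (z : R) : R :=
  (1 + 36 * z + sqrt ((1 - 12 * z) ^ 3)) / (2 * (1 + 4 * z) ^ 2).

Definition is_gf_coeffs (a : nat -> R) : Prop :=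
  exists r : R, 0 < r /\
    forall z : R, Rabs z < r -> is_pseries a z (gf z).

(** The generating function [gf] satisfies the first-order linear differential
    equation [(1 - 12 z) (1 + 4 z) gf' + (26 - 24 z) gf = 27] near [0]: the
    square root [s = sqrt ((1 - 12 z)^3)] enters [gf'] only through
    [s' = -18 s / (1 - 12 z)], and its contributions cancel.  Comparing the
    coefficients of [z^(n-1)] on both sides of the equation, with the power
    series of [gf] differentiated term by term, gives the recurrence. *)

From Stdlib Require Import Reals Lra Lia.
From Coquelicot Require Import Coquelicot.
Open Scope R_scope.

Lemma locally_disk (r z : R) (P : R -> Prop) :
  Rabs z < r -> (forall t, Rabs t < r -> P t) -> locally z P.
Proof.
  intros Hz HP.
  assert (Hgap : 0 < r - Rabs z) by lra.
  exists (mkposreal _ Hgap); intros t Ht; apply HP.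
  change (Rabs (t - z) < r - Rabs z) in Ht.
  pose proof (Rabs_triang_inv t z); lra.
Qed.

Lemma CV_radius_ge_of_ex_pseries (a : nat -> R) (x : R) :
  ex_pseries a x -> Rbar_le (Rabs x) (CV_radius a).
Proof.
  intros [l Hl].
  apply (proj1 (CV_radius_bounded a)).
  destruct (filterlim_bounded (fun k => scal (pow_n x k) (a k))) as [M HM].
  { exists 0; exact (ex_series_lim_0 _ (ex_intro _ l Hl)). }
  exists M; intro n.
  rewrite RPow_abs, Rabs_mult, Rabs_Rabsolu, <- Rabs_mult, Rmult_comm, <- pow_n_pow.
  exact (HM n).
Qed.

Lemma CV_radius_gt_of_disk (a : nat -> R) (r z : R) :
  (forall t, Rabs t < r -> ex_pseries a t) -> Rabs z < r ->
  Rbar_lt (Rabs z) (CV_radius a).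
Proof.
  intros Hconv Hz.
  set (t := (Rabs z + r) / 2).
  assert (Ht : Rabs t = t) by (apply Rabs_pos_eq; pose proof (Rabs_pos z); unfold t; lra).
  eapply Rbar_lt_le_trans; [| apply CV_radius_ge_of_ex_pseries, Hconv].
  - rewrite Ht; simpl; unfold t; lra.
  - rewrite Ht; unfold t; lra.
Qed.

Lemma is_pseries_coeffs_unique (a b : nat -> R) (f : R -> R) (r : R) :
  0 < r ->
  (forall z, Rabs z < r -> is_pseries a z (f z)) ->
  (forall z, Rabs z < r -> is_pseries b z (f z)) ->
  forall n, a n = b n.
Proof.
  intros Hr Ha Hb n.
  assert (H0 : Rabs 0 < r) by (rewrite Rabs_R0; exact Hr).
  apply PSeries_ext_recip.
  - rewrite <- Rabs_R0; apply (CV_radius_gt_of_disk _ r); [|exact H0].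
    intros t Ht; exists (f t); exact (Ha t Ht).
  - rewrite <- Rabs_R0; apply (CV_radius_gt_of_disk _ r); [|exact H0].
    intros t Ht; exists (f t); exact (Hb t Ht).
  - apply (locally_disk r); [exact H0|].
    intros t Ht; rewrite (is_pseries_unique _ _ _ (Ha t Ht)).
    exact (eq_sym (is_pseries_unique _ _ _ (Hb t Ht))).
Qed.

Lemma is_pseries_const (c x : R) :
  is_pseries (fun n => match n with O => c | S _ => 0 end) x c.
Proof.
  apply (filterlim_ext (fun _ => c)); [|apply filterlim_const].
  intro n; symmetry; induction n as [|n IH].
  - rewrite sum_O; exact (scal_one c).
  - rewrite sum_Sn, IH; change (c + pow_n x (S n) * 0 = c); ring.
Qed.

Lemma is_pseries_derive_of_disk (a : nat -> R) (f : R -> R) (r z df : R) :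
  (forall t, Rabs t < r -> is_pseries a t (f t)) ->
  Rabs z < r -> is_derive f z df -> is_pseries (PS_derive a) z df.
Proof.
  intros Ha Hz Hf.
  assert (Hrad : Rbar_lt (Rabs z) (CV_radius a)).
  { apply (CV_radius_gt_of_disk _ r); [|exact Hz].
    intros t Ht; exists (f t); exact (Ha t Ht). }
  assert (HfP : is_derive f z (PSeries (PS_derive a) z)).
  { apply (is_derive_ext_loc (PSeries a)); [|exact (is_derive_PSeries a z Hrad)].
    apply (locally_disk r); [exact Hz|].
    intros t Ht; exact (is_pseries_unique _ _ _ (Ha t Ht)). }
  replace df with (PSeries (PS_derive a) z).
  - exact (PSeries_correct _ _ (ex_pseries_derive a z Hrad)).
  - rewrite <- (is_derive_unique _ _ _ Hf); exact (eq_sym (is_derive_unique _ _ _ HfP)).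
Qed.

Definition PS_mul_quad (p0 p1 p2 : R) (a : nat -> R) : nat -> R :=
  PS_plus (PS_scal p0 a) (PS_plus (PS_scal p1 (PS_incr_1 a)) (PS_scal p2 (PS_incr_n a 2))).

Lemma is_pseries_mul_quad (p0 p1 p2 : R) (a : nat -> R) (x l : R) :
  is_pseries a x l ->
  is_pseries (PS_mul_quad p0 p1 p2 a) x ((p0 + p1 * x + p2 * x ^ 2) * l).
Proof.
  intros Ha.
  assert (Hcomm : forall c : R, mult x c = mult c x) by (intro c; apply Rmult_comm).
  replace ((p0 + p1 * x + p2 * x ^ 2) * l) with
    (plus (scal p0 l) (plus (scal p1 (scal x l)) (scal p2 (scal (pow_n x 2) l)))).
  - pose proof (is_pseries_scal p0 _ _ _ (Hcomm p0) Ha) as H0.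
    pose proof (is_pseries_scal p1 _ _ _ (Hcomm p1) (is_pseries_incr_1 _ _ _ Ha)) as H1.
    pose proof (is_pseries_scal p2 _ _ _ (Hcomm p2) (is_pseries_incr_n _ 2 _ _ Ha)) as H2.
    exact (is_pseries_plus _ _ _ _ _ H0 (is_pseries_plus _ _ _ _ _ H1 H2)).
  - unfold plus, scal; simpl; unfold mult, one; simpl; ring.
Qed.

Lemma pseries_ode_recurrence (a : nat -> R) (f df : R -> R)
    (r p0 p1 p2 q0 q1 c : R) :
  0 < r ->
  (forall z, Rabs z < r -> is_pseries a z (f z)) ->
  (forall z, Rabs z < r -> is_derive f z (df z)) ->
  (forall z, Rabs z < r ->
     (p0 + p1 * z + p2 * z ^ 2) * df z + (q0 + q1 * z) * f z = c) ->
  forall m : nat,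
    p0 * INR (m + 2) * a (m + 2)%nat + (p1 * INR (m + 1) + q0) * a (m + 1)%nat
    + (p2 * INR m + q1) * a m = 0.
Proof.
  intros Hr Ha Hdf Hode m.
  set (L := PS_plus (PS_mul_quad p0 p1 p2 (PS_derive a)) (PS_mul_quad q0 q1 0 a)).
  assert (HL : forall z, Rabs z < r -> is_pseries L z c).
  { intros z Hz; rewrite <- (Hode z Hz).
    replace ((q0 + q1 * z) * f z) with ((q0 + q1 * z + 0 * z ^ 2) * f z) by ring.
    exact (is_pseries_plus _ _ _ _ _
      (is_pseries_mul_quad p0 p1 p2 _ _ _
         (is_pseries_derive_of_disk a f r z (df z) Ha Hz (Hdf z Hz)))
      (is_pseries_mul_quad q0 q1 0 _ _ _ (Ha z Hz))). }
  pose proof (is_pseries_coeffs_unique _ _ _ r Hr HL (fun z _ => is_pseries_const c z) (S m))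
    as HLm.
  replace (m + 2)%nat with (S (S m)) by lia; replace (m + 1)%nat with (S m) by lia.
  unfold L, PS_mul_quad, PS_plus, PS_scal, PS_incr_n, PS_incr_1, PS_derive,
    plus, scal, mult, zero in HLm.
  destruct m as [|m]; cbn -[INR] in HLm; rewrite ?S_INR, ?INR_0 in HLm |- *;
    (eapply eq_trans; [|exact HLm]); ring.
Qed.

Definition gf_derive (z : R) : R :=
  (36 - 18 * sqrt ((1 - 12 * z) ^ 3) / (1 - 12 * z)) / (2 * (1 + 4 * z) ^ 2)
  - 4 * (1 + 36 * z + sqrt ((1 - 12 * z) ^ 3)) / (1 + 4 * z) ^ 3.

Lemma is_derive_gf (z : R) : Rabs z < 1/12 -> is_derive gf z (gf_derive z).
Proof.
  intros Hz; apply Rabs_def2 in Hz.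
  assert (Hsq : 0 < (1 - 12 * z) ^ 3) by (apply pow_lt; lra).
  pose proof (sqrt_lt_R0 _ Hsq) as Hs.
  pose proof (sqrt_sqrt _ (Rlt_le _ _ Hsq)) as Hss.
  unfold gf, gf_derive; auto_derive.
  - repeat split; try lra; nra.
  - replace ((1 + - (12 * z)) * ((1 + - (12 * z)) * ((1 + - (12 * z)) * 1)))
      with ((1 - 12 * z) ^ 3) by ring.
    set (s := sqrt ((1 - 12 * z) ^ 3)) in *.
    field_simplify_eq; [| repeat split; lra || nra].
    replace (s ^ 2) with ((1 - 12 * z) ^ 3) by (rewrite <- Hss; ring).
    ring.
Qed.

Lemma gf_ode (z : R) : Rabs z < 1/12 ->
  (1 - 12 * z) * (1 + 4 * z) * gf_derive z + (26 - 24 * z) * gf z = 27.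
Proof.
  intros Hz; apply Rabs_def2 in Hz.
  unfold gf_derive, gf; field; lra.
Qed.

Theorem mainTheorem7 (a : nat -> R) :
  is_gf_coeffs a ->
  forall n : nat, (2 <= n)%nat ->
    INR n * a n = (8 * INR n - 34) * a (n - 1)%nat
                  + 24 * (2 * INR n - 3) * a (n - 2)%nat.
Proof.
  intros [r [Hr Hgf]] n Hn.
  set (rho := Rmin r (1/12)).
  assert (Hrho : 0 < rho) by (apply Rmin_glb_lt; lra).
  assert (Hdisk : forall z, Rabs z < rho -> Rabs z < r /\ Rabs z < 1/12).
  { intros z Hz; split; eapply Rlt_le_trans; eauto; [apply Rmin_l | apply Rmin_r]. }
  assert (Hode : forall z, Rabs z < rho ->
    (1 + -8 * z + -48 * z ^ 2) * gf_derive z + (26 + -24 * z) * gf z = 27).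
  { intros z Hz; rewrite <- (gf_ode z (proj2 (Hdisk z Hz))); ring. }
  pose proof (pseries_ode_recurrence a gf gf_derive rho 1 (-8) (-48) 26 (-24) 27 Hrho
    (fun z Hz => Hgf z (proj1 (Hdisk z Hz)))
    (fun z Hz => is_derive_gf z (proj2 (Hdisk z Hz))) Hode) as Hrec.
  destruct n as [|[|m]]; try lia.
  replace (S (S m) - 1)%nat with (m + 1)%nat by lia.
  replace (S (S m) - 2)%nat with m by lia.
  replace (S (S m)) with (m + 2)%nat by lia.
  apply Rminus_diag_uniq; rewrite <- (Hrec m), !plus_INR; simpl; ring.
Qed.
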